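(* Let $H$ be a separable infinite-dimensional Hilbert space with a fixed orthonormal basis $(e_i)_{i\in\mathbb{N}}$, and let $\mathcal{L}_2$ be the Hilbert–Schmidt operators on $H$, identified with their matrices in this basis. Let $A=(a_{ij})_{i,j\in\mathbb{N}}$ be a Schur multiplier of $\mathcal{L}_2$ such that the map $S_A\colon\mathcal{L}_2\to\mathcal{L}_2$, $S_A(x)=A\circ x$, is injective. Then $S_A(xy)=S_A(x)S_A(y)$ for all $x,y\in\mathcal{L}_2$ if and only if $a_{ij}=f(i)/f(j)$ for all $i,j$, for some sequence $f\colon\mathbb{N}\to\mathbb{C}$ that is bounded and bounded away from zero.
   Context: $\mathcal{L}_2=\{x\in B(H): \tau(|x|^2)<\infty\}$, where $\tau$ is the canonical trace. $A\circ x$ denotes the entrywise product of the matrix $A$ with the matrix of $x$ in the fixed basis. A Schur multiplier of $\mathcal{L}_2$ is an infinite matrix $A$ such that $A\circ x\in\mathcal{L}_2$ for every $x\in\mathcal{L}_2$; these are exactly the matrices with uniformly bounded entries. *)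

From Stdlib Require Import Reals.
From Coquelicot Require Import Coquelicot.
Open Scope R_scope.

Definition mat := nat -> nat -> C.

(* Hilbert-Schmidt condition: tau(|x|^2) = sum_{i,j} |x_ij|^2 < oo,
   i.e. the (nonnegative) double series has bounded partial sums. *)
Definition HS (x : mat) : Prop :=
  exists M : R, forall n : nat,
    sum_f_R0 (fun i => sum_f_R0 (fun j => (Cmod (x i j))^2) n) n <= M.

Definition Cseries (u : nat -> C) : C :=
  (Series (fun k => Re (u k)), Series (fun k => Im (u k))).

(* Matrix (= operator) product: (xy)_ij = sum_k x_ik y_kj
   (absolutely convergent for Hilbert-Schmidt x, y). *)
Definition mmul (x y : mat) : mat :=
  fun i j => Cseries (fun k => Cmult (x i k) (y k j)).

Definition schur (A x : mat) : mat := fun i j => Cmult (A i j) (x i j).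

Definition schur_multiplier (A : mat) : Prop :=
  forall x, HS x -> HS (schur A x).

Definition SA_injective (A : mat) : Prop :=
  forall x y, HS x -> HS y -> schur A x = schur A y -> x = y.

(* Matrix units are Hilbert-Schmidt and E_ij E_jk = E_ik, so multiplicativity of S_A
   forces a_ik = a_ij a_jk; injectivity makes every a_ij nonzero, hence a_ii = 1 and
   a_ij = f(i) / f(j) with f(i) = a_i0.  Applying S_A to square-summable vectors placed
   in column 0 and in row 0 shows that f and 1/f are bounded, because a multiplier of
   l^2 is bounded.  Conversely, if a_ij = f(i) / f(j), the factors f(k) cancel inside
   the absolutely convergent series (xy)_ij = sum_k x_ik y_kj. *)

From Stdlib Require Import Reals Lra Lia FunctionalExtensionality.
From Coquelicot Require Import Coquelicot.
Open Scope R_scope.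

Definition sq_summable (v : nat -> C) : Prop :=
  exists M, forall n, sum_f_R0 (fun i => Cmod (v i) ^ 2) n <= M.

Lemma sum_f_R0_le_mono (u : nat -> R) n m :
  (forall k, 0 <= u k) -> (n <= m)%nat -> sum_f_R0 u n <= sum_f_R0 u m.
Proof.
  intros Hu Hnm; induction Hnm as [|m _ IH]; [lra|].
  rewrite tech5; specialize (Hu (S m)); lra.
Qed.

Lemma le_sum_f_R0_term (u : nat -> R) i n :
  (forall k, 0 <= u k) -> (i <= n)%nat -> u i <= sum_f_R0 u n.
Proof.
  intros Hu Hin; eapply Rle_trans; [|apply (sum_f_R0_le_mono u i n Hu Hin)].
  destruct i; [simpl; lra|].
  rewrite tech5; pose proof (cond_pos_sum u i Hu); lra.
Qed.

Lemma sum_f_R0_telescope (u : nat -> R) n :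
  sum_f_R0 (fun i => u (S i) - u i) n = u (S n) - u O.
Proof. induction n as [|n IH]; [reflexivity|]. rewrite tech5, IH; ring. Qed.

Lemma sum_f_R0_indicator (j : nat) (r : R) n :
  sum_f_R0 (fun k => if Nat.eqb k j then r else 0) n = if Nat.leb j n then r else 0.
Proof.
  induction n as [|n IH].
  - destruct j; reflexivity.
  - rewrite tech5, IH.
    destruct (Nat.eqb_spec (S n) j) as [<-|Hne].
    + rewrite Nat.leb_refl.
      replace (Nat.leb (S n) n) with false by (symmetry; apply Nat.leb_gt; lia); ring.
    + replace (Nat.eqb (S n) j) with false by (symmetry; apply Nat.eqb_neq; auto).
      destruct (Nat.leb_spec j n), (Nat.leb_spec j (S n)); try lia; ring.
Qed.

Lemma Series_indicator (j : nat) (r : R) :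
  Series (fun k => if Nat.eqb k j then r else 0) = r.
Proof.
  set (u := fun k => if Nat.eqb k j then r else 0).
  apply is_series_unique; change (is_lim_seq (sum_n u) r).
  apply (is_lim_seq_ext_loc (fun _ => r)); [|apply is_lim_seq_const].
  exists j; intros n Hn; unfold u.
  rewrite sum_n_Reals, sum_f_R0_indicator.
  now replace (Nat.leb j n) with true by (symmetry; apply Nat.leb_le; lia).
Qed.

Lemma Cseries_indicator (j : nat) (v : C) :
  Cseries (fun k => if Nat.eqb k j then v else 0%C) = v.
Proof.
  destruct v as [a b]; unfold Cseries.
  rewrite (Series_ext _ (fun k => if Nat.eqb k j then a else 0)),
          (Series_ext (fun k => Im _) (fun k => if Nat.eqb k j then b else 0)),
          !Series_indicator;
    try reflexivity; intros k; now destruct (Nat.eqb k j).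
Qed.

Lemma ex_series_bounded_nonneg (u : nat -> R) M :
  (forall k, 0 <= u k) -> (forall n, sum_f_R0 u n <= M) -> ex_series u.
Proof.
  intros Hu HM.
  destruct (ex_finite_lim_seq_incr (sum_n u) M) as [l Hl].
  - intros n; rewrite sum_Sn; unfold plus; simpl; specialize (Hu (S n)); lra.
  - intros n; rewrite sum_n_Reals; apply HM.
  - now exists l.
Qed.

Lemma im_le_Cmod (c : C) : Rabs (Im c) <= Cmod c.
Proof.
  pose proof (Cmod2_alt c); pose proof (Cmod_ge_0 c); pose proof (pow2_ge_0 (Re c)).
  unfold Rabs; destruct (Rcase_abs (Im c)); nra.
Qed.

Lemma ex_series_Re_Im (u : nat -> C) :
  ex_series (fun k => Cmod (u k)) ->
  ex_series (fun k => Re (u k)) /\ ex_series (fun k => Im (u k)).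
Proof.
  intros Hu; split; apply (@ex_series_le R_AbsRing R_CompleteNormedModule _ _)
    with (2 := Hu); intros k; [apply re_le_Cmod | apply im_le_Cmod].
Qed.

Lemma ex_series_Cmod_mult (u v : nat -> C) :
  sq_summable u -> sq_summable v -> ex_series (fun k => Cmod (u k * v k)).
Proof.
  intros [Mu Hu] [Mv Hv].
  apply ex_series_bounded_nonneg with (Mu + Mv); [intros; apply Cmod_ge_0|].
  intros n; eapply Rle_trans.
  - apply sum_growing with (Bn := fun k => Cmod (u k) ^ 2 + Cmod (v k) ^ 2).
    intros k; rewrite Cmod_mult.
    pose proof (pow2_ge_0 (Cmod (u k) - Cmod (v k))); pose proof (Cmod_ge_0 (u k));
      pose proof (Cmod_ge_0 (v k)); nra.
  - rewrite plus_sum; specialize (Hu n); specialize (Hv n); lra.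
Qed.

Lemma Cseries_scal (c : C) (u : nat -> C) :
  ex_series (fun k => Re (u k)) -> ex_series (fun k => Im (u k)) ->
  Cseries (fun k => c * u k)%C = (c * Cseries u)%C.
Proof.
  intros Hre Him; unfold Cseries, Cmult; simpl; f_equal.
  - rewrite Series_minus by now apply (@ex_series_scal_l R_AbsRing R_NormedModule).
    now rewrite !Series_scal_l.
  - rewrite Series_plus by now apply (@ex_series_scal_l R_AbsRing R_NormedModule).
    now rewrite !Series_scal_l.
Qed.

Lemma HS_sq_summable_row (x : mat) i : HS x -> sq_summable (fun k => x i k).
Proof.
  intros [M HM]; exists M; intros n.
  assert (Hpos : forall i k, 0 <= Cmod (x i k) ^ 2) by (intros; apply pow2_ge_0).
  apply Rle_trans with (sum_f_R0 (fun k => Cmod (x i k) ^ 2) (Nat.max n i)).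
  { apply sum_f_R0_le_mono; [auto | lia]. }
  eapply Rle_trans; [|apply (HM (Nat.max n i))].
  apply (le_sum_f_R0_term (fun i => sum_f_R0 (fun k => Cmod (x i k) ^ 2) _));
    [intros; apply cond_pos_sum; auto | lia].
Qed.

Lemma HS_sq_summable_col (x : mat) j : HS x -> sq_summable (fun k => x k j).
Proof.
  intros [M HM]; exists M; intros n.
  assert (Hpos : forall i k, 0 <= Cmod (x i k) ^ 2) by (intros; apply pow2_ge_0).
  apply Rle_trans with (sum_f_R0 (fun k => Cmod (x k j) ^ 2) (Nat.max n j)).
  { apply sum_f_R0_le_mono; [auto | lia]. }
  eapply Rle_trans; [|apply (HM (Nat.max n j))].
  apply sum_Rle; intros k _.
  apply (le_sum_f_R0_term (fun l => Cmod (x k l) ^ 2)); [auto | lia].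
Qed.

Lemma ex_series_mmul_Re_Im (x y : mat) i j : HS x -> HS y ->
  ex_series (fun k => Re (x i k * y k j)) /\ ex_series (fun k => Im (x i k * y k j)).
Proof.
  intros Hx Hy; apply ex_series_Re_Im, ex_series_Cmod_mult;
    [apply HS_sq_summable_row | apply HS_sq_summable_col]; assumption.
Qed.

Lemma schur_ratio_mmul (f : nat -> C) (A : mat) :
  (forall k, f k <> 0%C) -> (forall i j, A i j = (f i / f j)%C) ->
  forall x y, HS x -> HS y -> schur A (mmul x y) = mmul (schur A x) (schur A y).
Proof.
  intros Hf HA x y Hx Hy.
  apply functional_extensionality; intro i; apply functional_extensionality; intro j.
  unfold schur, mmul; rewrite HA.
  destruct (ex_series_mmul_Re_Im x y i j Hx Hy) as [Hre Him].
  rewrite <- Cseries_scal by assumption.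
  f_equal; apply functional_extensionality; intro k.
  rewrite !HA; field; auto.
Qed.

Lemma ln_le_sub1 (y : R) : 0 < y -> ln y <= y - 1.
Proof. intros Hy; pose proof (exp_ineq1_le (ln y)); rewrite exp_ln in *; lra. Qed.

Fixpoint runmax (b : nat -> R) (n : nat) : R :=
  match n with O => 1 | S n => Rmax (runmax b n) (b n) end.

Lemma runmax_ge1 b n : 1 <= runmax b n.
Proof. induction n as [|n IH]; simpl; [lra | eapply Rle_trans; [apply IH | apply Rmax_l]]. Qed.

(* The weights [w i = 1 / runmax b i - 1 / runmax b (S i)] telescope to a sum at most 1,
   while [b i * w i = runmax b (S i) / runmax b i - 1 >= ln (runmax b (S i) / runmax b i)]
   telescopes to [ln (runmax b (S n))] >= [ln (b n)]. *)
Lemma weighted_sums_bounded (b : nat -> R) :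
  (forall w, (forall i, 0 <= w i) -> (exists M, forall n, sum_f_R0 w n <= M) ->
     exists M, forall n, sum_f_R0 (fun i => b i * w i) n <= M) ->
  exists M, forall i, b i <= M.
Proof.
  intros Hb.
  set (B := runmax b); set (w := fun i => / B i - / B (S i)).
  assert (HB1 : forall i, 1 <= B i) by apply runmax_ge1.
  assert (HBS : forall i, B (S i) = Rmax (B i) (b i)) by reflexivity.
  assert (Hw0 : forall i, 0 <= w i).
  { intros i; unfold w; rewrite HBS.
    pose proof (Rinv_le_contravar (B i) (Rmax (B i) (b i))).
    specialize (HB1 i); pose proof (Rmax_l (B i) (b i)); lra. }
  assert (Hwsum : forall n, sum_f_R0 w n <= 1).
  { intros n; rewrite (sum_eq _ (fun i => (- / B (S i)) - (- / B i))) by (intros; unfold w; ring).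
    rewrite (sum_f_R0_telescope (fun i => - / B i)); change (B O) with 1; rewrite Rinv_1.
    pose proof (Rinv_0_lt_compat (B (S n))); specialize (HB1 (S n)); lra. }
  assert (Hbw : forall i, ln (B (S i)) - ln (B i) <= b i * w i).
  { intros i; pose proof (HB1 i); pose proof (HB1 (S i)).
    assert (E : b i * w i = B (S i) / B i - 1).
    { unfold w; rewrite HBS; unfold Rmax; destruct (Rle_dec (B i) (b i)); field; lra. }
    rewrite E, <- ln_div by lra.
    apply ln_le_sub1, Rdiv_lt_0_compat; lra. }
  destruct (Hb w Hw0 (ex_intro _ 1 Hwsum)) as [M HM].
  exists (exp M); intros i.
  assert (Hln : ln (B (S i)) <= M).
  { eapply Rle_trans; [|apply (HM i)].
    replace (ln (B (S i))) with (ln (B (S i)) - ln (B O)) by (change (B O) with 1; rewrite ln_1; ring).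
    rewrite <- (sum_f_R0_telescope (fun k => ln (B k))); apply sum_Rle; auto. }
  apply Rle_trans with (B (S i)); [rewrite HBS; apply Rmax_r|].
  apply Rnot_lt_le; intros H; rewrite <- (exp_ln (B (S i))) in H by (pose proof (HB1 (S i)); lra).
  apply exp_lt_inv in H; lra.
Qed.

Lemma sq_summable_mult_bounded (a : nat -> C) :
  (forall v, sq_summable v -> sq_summable (fun i => a i * v i)%C) ->
  exists M, forall i, Cmod (a i) <= M.
Proof.
  intros Ha.
  destruct (weighted_sums_bounded (fun i => Cmod (a i) ^ 2)) as [M HM].
  - intros w Hw [Mw HMw].
    assert (Hsqrt : forall i, Cmod (RtoC (sqrt (w i))) ^ 2 = w i).
    { intros i; rewrite Cmod_R, Rabs_pos_eq by apply sqrt_pos; apply pow2_sqrt, Hw. }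
    destruct (Ha (fun i => RtoC (sqrt (w i)))) as [M HM].
    + exists Mw; intros n; rewrite (sum_eq _ w); auto.
    + exists M; intros n; rewrite <- (HM n); apply Req_le, sum_eq; intros i _.
      now rewrite Cmod_mult, Rpow_mult_distr, Hsqrt.
  - exists (1 + M); intros i; specialize (HM i); pose proof (Cmod_ge_0 (a i)); nra.
Qed.

Lemma Cmod_if_sq (b : bool) (z : C) :
  Cmod (if b then z else 0%C) ^ 2 = if b then Cmod z ^ 2 else 0.
Proof. destruct b; [reflexivity | rewrite Cmod_0; ring]. Qed.

Definition col_mat (v : nat -> C) : mat := fun i j => if Nat.eqb j 0 then v i else 0%C.
Definition row_mat (v : nat -> C) : mat := fun i j => if Nat.eqb i 0 then v j else 0%C.

Lemma HS_col_mat (v : nat -> C) : HS (col_mat v) <-> sq_summable v.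
Proof.
  assert (E : forall n, sum_f_R0 (fun i => sum_f_R0 (fun j => Cmod (col_mat v i j) ^ 2) n) n
                        = sum_f_R0 (fun i => Cmod (v i) ^ 2) n).
  { intros n; apply sum_eq; intros i _; unfold col_mat.
    rewrite (sum_eq _ (fun j => if Nat.eqb j 0 then Cmod (v i) ^ 2 else 0))
      by (intros; apply Cmod_if_sq).
    now rewrite sum_f_R0_indicator. }
  unfold HS, sq_summable; now setoid_rewrite E.
Qed.

Lemma HS_row_mat (v : nat -> C) : HS (row_mat v) <-> sq_summable v.
Proof.
  assert (E : forall n, sum_f_R0 (fun i => sum_f_R0 (fun j => Cmod (row_mat v i j) ^ 2) n) n
                        = sum_f_R0 (fun j => Cmod (v j) ^ 2) n).
  { intros n; unfold row_mat.
    rewrite (sum_eq _ (fun i => if Nat.eqb i 0 then sum_f_R0 (fun j => Cmod (v j) ^ 2) n else 0)).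
    - now rewrite sum_f_R0_indicator.
    - intros i _; destruct (Nat.eqb i 0); [reflexivity|].
      rewrite Cmod_0, sum_cte; ring. }
  unfold HS, sq_summable; now setoid_rewrite E.
Qed.

Lemma schur_col_mat (A : mat) (v : nat -> C) :
  schur A (col_mat v) = col_mat (fun i => A i O * v i)%C.
Proof.
  apply functional_extensionality; intro i; apply functional_extensionality; intro j.
  unfold schur, col_mat; destruct (Nat.eqb_spec j 0) as [->|]; [reflexivity | ring].
Qed.

Lemma schur_row_mat (A : mat) (v : nat -> C) :
  schur A (row_mat v) = row_mat (fun j => A O j * v j)%C.
Proof.
  apply functional_extensionality; intro i; apply functional_extensionality; intro j.
  unfold schur, row_mat; destruct (Nat.eqb_spec i 0) as [->|]; [reflexivity | ring].
Qed.

Lemma schur_multiplier_col_bounded (A : mat) :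
  schur_multiplier A -> exists M, forall i, Cmod (A i O) <= M.
Proof.
  intros HA; apply sq_summable_mult_bounded; intros v Hv.
  apply HS_col_mat; rewrite <- schur_col_mat; now apply HA, HS_col_mat.
Qed.

Lemma schur_multiplier_row_bounded (A : mat) :
  schur_multiplier A -> exists M, forall j, Cmod (A O j) <= M.
Proof.
  intros HA; apply sq_summable_mult_bounded; intros v Hv.
  apply HS_row_mat; rewrite <- schur_row_mat; now apply HA, HS_row_mat.
Qed.

Definition mat_unit (i j : nat) : mat :=
  fun k l => if Nat.eqb k i then (if Nat.eqb l j then 1%C else 0%C) else 0%C.

Lemma HS_mat_unit i j : HS (mat_unit i j).
Proof.
  exists 1; intros n; unfold mat_unit.
  rewrite (sum_eq _ (fun k => if Nat.eqb k i then (if Nat.leb j n then 1 else 0) else 0)).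
  - rewrite sum_f_R0_indicator.
    destruct (Nat.leb i n), (Nat.leb j n); lra.
  - intros k _; destruct (Nat.eqb k i).
    + rewrite (sum_eq _ (fun l => if Nat.eqb l j then 1 else 0)), sum_f_R0_indicator;
        [reflexivity|]. intros l _; rewrite Cmod_if_sq, Cmod_1; destruct (Nat.eqb l j); ring.
    + rewrite Cmod_0, sum_cte; ring.
Qed.

Lemma mmul_mat_unit_entry (A : mat) i j k :
  mmul (schur A (mat_unit i j)) (schur A (mat_unit j k)) i k = (A i j * A j k)%C.
Proof.
  unfold mmul, schur, mat_unit; rewrite !Nat.eqb_refl.
  rewrite <- (Cseries_indicator j (A i j * A j k)%C); f_equal.
  apply functional_extensionality; intro l.
  destruct (Nat.eqb_spec l j) as [->|]; cbv beta iota; ring.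
Qed.

Lemma mmul_mat_unit (i j k : nat) : mmul (mat_unit i j) (mat_unit j k) i k = 1%C.
Proof.
  unfold mmul, mat_unit; rewrite !Nat.eqb_refl.
  transitivity (Cseries (fun l => if Nat.eqb l j then 1%C else 0%C));
    [|apply Cseries_indicator].
  f_equal; apply functional_extensionality; intro l.
  destruct (Nat.eqb_spec l j) as [->|]; cbv beta iota; ring.
Qed.

Section MultiplicativeSchur.

Variable A : mat.
Hypothesis HA : schur_multiplier A.
Hypothesis Hinj : SA_injective A.
Hypothesis Hmul : forall x y : mat, HS x -> HS y ->
  schur A (mmul x y) = mmul (schur A x) (schur A y).

Lemma schur_entry_mul i j k : A i k = (A i j * A j k)%C.
Proof.
  pose proof (f_equal (fun z => z i k) (Hmul _ _ (HS_mat_unit i j) (HS_mat_unit j k))) as H.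
  cbv beta in H; unfold schur at 1 in H.
  rewrite mmul_mat_unit, mmul_mat_unit_entry in H; rewrite <- H; ring.
Qed.

Lemma schur_entry_neq0 i j : A i j <> 0%C.
Proof.
  intros Hij.
  assert (E : mat_unit i j = fun _ _ => 0%C).
  { apply Hinj; [apply HS_mat_unit | exists 0; intros n; rewrite Cmod_0, !sum_cte; lra |].
    apply functional_extensionality; intro k; apply functional_extensionality; intro l.
    unfold schur, mat_unit.
    destruct (Nat.eqb_spec k i) as [->|], (Nat.eqb_spec l j) as [->|];
      rewrite ?Hij; ring. }
  apply (f_equal (fun z => fst (z i j))) in E; unfold mat_unit in E.
  rewrite !Nat.eqb_refl in E; simpl in E; lra.
Qed.

Lemma schur_entry_diag i : A i i = 1%C.
Proof.
  pose proof (schur_entry_neq0 i i).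
  transitivity (A i i * A i i / A i i)%C; [|rewrite <- schur_entry_mul]; now field.
Qed.

Lemma schur_entry_inv j : (A O j * A j O)%C = 1%C.
Proof. now rewrite <- schur_entry_mul, schur_entry_diag. Qed.

Lemma schur_entry_ratio : exists f : nat -> C,
  (exists m M : R, 0 < m /\ forall i, m <= Cmod (f i) <= M) /\
  forall i j, A i j = (f i / f j)%C.
Proof.
  destruct (schur_multiplier_col_bounded A HA) as [Mc Hc].
  destruct (schur_multiplier_row_bounded A HA) as [Mr Hr].
  exists (fun i => A i O); split.
  - assert (HMr : 1 <= Mr) by (rewrite <- Cmod_1, <- (schur_entry_diag O); apply Hr).
    exists (/ Mr), Mc; split; [apply Rinv_0_lt_compat; lra|].
    intros i; split; [|apply Hc].
    assert (E : Cmod (A O i) * Cmod (A i O) = 1) by (now rewrite <- Cmod_mult, schur_entry_inv, Cmod_1).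
    specialize (Hr i); pose proof (Cmod_ge_0 (A i O)).
    apply (Rmult_le_reg_l Mr); [lra|]; rewrite Rinv_r by lra; nra.
  - intros i j; pose proof (schur_entry_neq0 j O).
    rewrite (schur_entry_mul i O j).
    replace (A O j) with (A O j * A j O / A j O)%C by now field.
    rewrite schur_entry_inv; now field.
Qed.

End MultiplicativeSchur.

Theorem proposition4p1 (A : mat) (HA : schur_multiplier A)
  (Hinj : SA_injective A) :
  (forall x y : mat, HS x -> HS y ->
     schur A (mmul x y) = mmul (schur A x) (schur A y))
  <->
  (exists f : nat -> C,
     (exists m M : R, (0 < m)%R /\ forall i, (m <= Cmod (f i) <= M)%R) /\
     forall i j, A i j = Cdiv (f i) (f j)).
Proof.
  split.
  - apply schur_entry_ratio; assumption.
  - intros [f [[m [M [Hm Hf]]] Hratio]].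
    apply (schur_ratio_mmul f); [|exact Hratio].
    intros k Hk; specialize (Hf k); rewrite Hk, Cmod_0 in Hf; lra.
Qed.
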